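(* Let $(P_1,\dots,P_J)$ be a stochastically rationalizable stochastic demand system assigning probability zero to patches that lie on more than one budget plane, and let $\pi=(\pi_{-J}',\pi_J')'$ be its vector representation. For $k\in\{1,\dots,G\}$ let $\delta_k(J)=\int y_k\,dP_J(y)$ be expected demand for good $k$ on $\mathcal{B}_J$. Then $$\underline\delta_k(J)\le\delta_k(J)\le\overline\delta_k(J),$$ where $\underline\delta_k(J)=\min\{\underline d_k(J)A_J\nu:\ A_{-J}\nu=\pi_{-J},\ \nu\ge0\}$ and $\overline\delta_k(J)=\max\{\overline d_k(J)A_J\nu:\ A_{-J}\nu=\pi_{-J},\ \nu\ge0\}$.
   Context: Budget planes $\mathcal B_j=\{y\in\mathbf R^G_+:p_j'y=1\}$, $p_j\in\mathbf R^G_{++}$. Patches are cells of the coarsest partition of $\bigcup_j\mathcal B_j$ such that each cell is, for every $j$, entirely on, strictly above or strictly below $\mathcal B_j$; patches on more than one budget plane are dropped, $x_{1|j},\dots,x_{I_j|j}$ are the remaining patches in $\mathcal B_j$, $I=\sum_jI_j$, with fixed representatives $y^*_{i|j}\in x_{i|j}$. A demand vector $(d_1,\dots,d_J)\in\prod_j\mathcal B_j$ is rationalizable if some strictly increasing $u:\mathbf R^G_+\to\mathbf R$ has $d_j\in\arg\max_{\mathcal B_j}u$ for all $j$. A stochastic demand system $(P_1,\dots,P_J)$ ($P_j$ a probability on $\mathcal B_j$) is stochastically rationalizable if some probability on $\prod_j\mathcal B_j$ concentrated on rationalizable demand vectors has marginals $P_1,\dots,P_J$. Its vector representation $\pi\in\mathbf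 R^I$ has $j$-th block $(P_j(x_{1|j}),\dots,P_j(x_{I_j|j}))$. $A\in\{0,1\}^{I\times H}$ has as columns (each once) exactly the binary $I$-vectors with one $1$ per block, at position $i_j$ in block $j$, such that $(y^*_{i_1|1},\dots,y^*_{i_J|J})$ is rationalizable. $A_J,\pi_J$ denote the rows/entries of block $J$ and $A_{-J},\pi_{-J}$ the rest. $\underline d_k(J)=(\underline d_k(1|J),\dots,\underline d_k(I_J|J))$ and $\overline d_k(J)=(\overline d_k(1|J),\dots,\overline d_k(I_J|J))$ are row vectors with $\underline d_k(i|J)=\inf\{y_k:y\in x_{i|J}\}$ and $\overline d_k(i|J)=\sup\{y_k:y\in x_{i|J}\}$. *)

From HB Require Import structures.
From mathcomp Require Import all_boot all_order all_algebra.
From mathcomp Require Import all_classical all_reals all_analysis.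
Set Implicit Arguments. Unset Strict Implicit. Unset Printing Implicit Defensive.
Import Order.TTheory GRing.Theory Num.Theory.
Local Open Scope classical_set_scope.
Local Open Scope ring_scope.

(* Consumption bundles in R^G are G-tuples of reals (with the product
   sigma-algebra generated by the coordinates, i.e. the Borel sets of R^G). *)

Section Demand.
Variables (R : realType) (G n : nat).
Local Notation vec := (G.-tuple R).
Variable p : 'I_n -> 'I_G -> R.

Definition dotp (j : 'I_n) (y : vec) : R := \sum_(k < G) p j k * tnth y k.

Definition nonnegv (y : vec) : Prop := forall k, 0 <= tnth y k.

Definition budget (j : 'I_n) : set vec := [set y | nonnegv y /\ dotp j y = 1].

Definition side (j : 'I_n) (y : vec) : option bool :=
  if dotp j y == 1 then None else Some (1 < dotp j y).

Definition signvec := {ffun 'I_n -> option bool}.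

(* The cell of the partition of the union of the budget planes with
   position pattern s (relevant when some s j = None). *)
Definition patchset (s : signvec) : set vec :=
  [set y | nonnegv y /\ forall j, side j y = s j].

(* s indexes a (retained) patchset x_{i|j} of B_j: the patchset lies on B_j, on no
   other budget plane, and is nonempty. *)
Definition retained (j : 'I_n) (s : signvec) : Prop :=
  [/\ s j = None, (forall j', j' != j -> s j' != None) & patchset s !=set0].

Definition multi_plane (s : signvec) : Prop :=
  exists j1 j2, [/\ j1 != j2, s j1 = None & s j2 = None].

Definition strictly_increasing (u : vec -> R) : Prop :=
  forall x y, nonnegv x -> (forall k, tnth x k <= tnth y k) -> x != y -> u x < u y.

Definition rationalizable (d : 'I_n -> vec) : Prop :=
  exists u : vec -> R, strictly_increasing u /\
    forall j, budget j (d j) /\ (forall y, budget j y -> u y <= u (d j)).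

Definition stoch_demand (P : 'I_n -> probability vec R) : Prop :=
  forall j, P j (budget j) = 1%E.

Definition stoch_rationalizable (P : 'I_n -> probability vec R) : Prop :=
  exists Q : probability (n.-tuple vec) R,
    (forall j (A : set vec), measurable A ->
        Q ((fun d : n.-tuple vec => tnth d j) @^-1` A) = P j A) /\
    exists S : set (n.-tuple vec),
      [/\ measurable S, S `<=` [set d | rationalizable (tnth d)] & Q S = 1%E].

Definition vrep (P : 'I_n -> probability vec R) (j : 'I_n) (s : signvec) : R :=
  fine (P j (patchset s)).

(* columns of A: one retained patchset per budget, whose representatives form a
   rationalizable demand vector *)
Definition choice_t := {ffun 'I_n -> signvec}.

Definition is_col (rep : signvec -> vec) (c : choice_t) : Prop :=
  (forall j, retained j (c j)) /\ rationalizable (fun j => rep (c j)).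

Definition feasible (rep : signvec -> vec) (pi : 'I_n -> signvec -> R)
    (J : 'I_n) (nu : choice_t -> R) : Prop :=
  (forall c, is_col rep c -> 0 <= nu c) /\
  (forall j s, j != J -> retained j s ->
     \sum_(c | `[< is_col rep c >] && (c j == s)) nu c = pi j s).

Definition dlow (k : 'I_G) (s : signvec) : R := inf [set tnth y k | y in patchset s].
Definition dupp (k : 'I_G) (s : signvec) : R := sup [set tnth y k | y in patchset s].

Definition objective (rep : signvec -> vec) (J : 'I_n) (d : signvec -> R)
    (nu : choice_t -> R) : R :=
  \sum_(c | `[< is_col rep c >]) d (c J) * nu c.

Definition delta_low rep pi J k : \bar R :=
  ereal_inf [set (objective rep J (dlow k) nu)%:E | nu in feasible rep pi J].
Definition delta_upp rep pi J k : \bar R :=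
  ereal_sup [set (objective rep J (dupp k) nu)%:E | nu in feasible rep pi J].

End Demand.

From HB Require Import structures.
From mathcomp Require Import all_boot all_order all_algebra.
From mathcomp Require Import all_classical all_reals all_analysis.
From mathcomp Require Import lra measurable_realfun.
Import Order.TTheory GRing.Theory Num.Theory.
Local Open Scope classical_set_scope.
Local Open Scope ring_scope.
Set Implicit Arguments. Unset Strict Implicit.

(* The probability Q on demand vectors that rationalizes (P_1, ..., P_J) is
   disintegrated along the patches: the weight of a column c is the Q-mass of
   the rationalizable demand vectors whose j-th choice lies in the patch c_j
   for every j.  Rationalizability only depends on the side of each budget
   plane on which each choice lies (revealed preference plus Afriat's
   construction), so the weights sit on columns of A; as Q-almost no demand
   vector meets a patch on several planes, they form a feasible nu that also
   satisfies A_J nu = pi_J.  Then d_k(J) A_J nu is the sum over the patches of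
   B_J of d_k times P_J(patch), and on each patch the coordinate y_k lies
   between the infimum and the supremum defining d_k. *)

Section BudgetGeometry.
Variables (R : realType) (G N : nat) (p : 'I_N -> 'I_G -> R).
Hypothesis p_gt0 : forall j g, 0 < p j g.
Local Notation vec := (G.-tuple R).

Variant side_spec (j : 'I_N) (y : vec) : option bool -> Type :=
  | SideOn of dotp p j y = 1 : side_spec j y None
  | SideAbove of 1 < dotp p j y : side_spec j y (Some true)
  | SideBelow of dotp p j y < 1 : side_spec j y (Some false).

Lemma sideP j y : side_spec j y (side p j y).
Proof.
rewrite /side; case: eqP => [|/eqP ne1]; first exact: SideOn.
by case: ltP => h; constructor; rewrite // lt_neqAle ne1.
Qed.

Lemma budget_side j y : budget p j y -> side p j y = None.
Proof. by case=> _ dot1; rewrite /side dot1 eqxx. Qed.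

Lemma side_budget j y : nonnegv y -> side p j y = None -> budget p j y.
Proof. by move=> y_ge0; case: sideP. Qed.

Lemma dotp_gt0 i j y : budget p i y -> 0 < dotp p j y.
Proof.
move=> [y_ge0 dot1].
have [k yk_gt0] : exists k, 0 < tnth y k.
  apply/not_existsP => no_pos; move: dot1; rewrite /dotp big1 => [/esym/eqP|k _].
    by rewrite oner_eq0.
  suff -> : tnth y k = 0 by rewrite mulr0.
  by apply/eqP; rewrite eq_le y_ge0 andbT leNgt; apply/negP => ?; apply: (no_pos k).
rewrite /dotp (bigD1 k) //=; apply: ltr_wpDr; last exact: mulr_gt0.
by apply: sumr_ge0 => l _; exact: mulr_ge0 (ltW (p_gt0 _ _)) (y_ge0 l).
Qed.

Lemma dotp_lt j (x y : vec) :
  (forall k, tnth x k <= tnth y k) -> x != y -> dotp p j x < dotp p j y.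
Proof.
move=> x_le_y x_neq_y.
have [k xk_neq] : exists k, tnth x k != tnth y k.
  apply/existsP; apply: contraNT x_neq_y => /existsPn xy_eq.
  by apply/eqP/eq_from_tnth => k; apply/eqP/negPn/xy_eq.
rewrite /dotp (bigD1 k) //= [ltRHS](bigD1 k) //= ltr_leD //.
  by rewrite ltr_pM2l // lt_neqAle xk_neq x_le_y.
by apply: ler_sum => l _; rewrite ler_pM2l.
Qed.

Lemma rationalizable_budget (d : 'I_N -> vec) j :
  rationalizable p d -> budget p j (d j).
Proof. by case=> u [_ /(_ j) []]. Qed.

Lemma budget_coord_le j y k : budget p j y -> tnth y k <= (p j k)^-1.
Proof.
move=> [y_ge0 dot1]; rewrite -[_^-1]mul1r ler_pdivlMr // mulrC -dot1.
rewrite /dotp (bigD1 k) //= lerDl.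
by apply: sumr_ge0 => l _; exact: mulr_ge0 (ltW (p_gt0 _ _)) (y_ge0 l).
Qed.

End BudgetGeometry.

(* Afriat's construction: a utility rationalizing the choices d from any
   ranking U of them that respects revealed preference. *)
Section Afriat.
Variables (R : realType) (G N : nat) (p : 'I_N.+1 -> 'I_G -> R).
Hypothesis p_gt0 : forall j g, 0 < p j g.
Variables (d : 'I_N.+1 -> G.-tuple R) (U : 'I_N.+1 -> R).
Hypothesis d_budget : forall i, budget p i (d i).
Hypothesis U_weak : forall i j, side p j (d i) = None -> U i <= U j.
Hypothesis U_strict : forall i j, side p j (d i) = Some false -> U i < U j.

Definition afriat_rank i : R := #|[set j | U j < U i]%SET|%:R.

Lemma afriat_rank_ge0 i : 0 <= afriat_rank i.
Proof. exact: ler0n. Qed.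

Lemma afriat_rank_le_card i : afriat_rank i <= N.+1%:R.
Proof. by rewrite ler_nat (leq_trans (max_card _)) ?card_ord. Qed.

Lemma afriat_rank_le i j : U i <= U j -> afriat_rank i <= afriat_rank j.
Proof.
move=> Uij; rewrite ler_nat; apply/subset_leq_card/fintype.subsetP => l.
by rewrite !inE => /lt_le_trans; apply.
Qed.

Lemma afriat_rank_lt i j : U i < U j -> afriat_rank i + 1 <= afriat_rank j.
Proof.
move=> Uij; rewrite /afriat_rank natr1 ler_nat [X in (_ <= X)%N](cardsD1 i).
rewrite inE Uij add1n ltnS.
apply/subset_leq_card/fintype.subsetP => l; rewrite !inE => Uli.
by rewrite (lt_trans Uli Uij) andbT; apply: contraTneq Uli => ->; rewrite ltxx.
Qed.

(* Above B_j the term jumps by N+1 past every rank, so a plane lying strictly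
   below d i cannot pull afriat_utility (d i) under afriat_rank i. *)
Definition afriat_shift (t : R) : R := if 0 < t then t + N.+1%:R else t.

Lemma afriat_shift_lt s t : s < t -> afriat_shift s < afriat_shift t.
Proof.
rewrite /afriat_shift; have := ler0n R N.+1.
by case: (ltP 0 s) => s0; case: (ltP 0 t) => t0; lra.
Qed.

Definition afriat_term j (x : G.-tuple R) : R :=
  afriat_rank j + afriat_shift (dotp p j x - 1).

Definition afriat_utility (x : G.-tuple R) : R :=
  afriat_term [arg min_(j < ord0) afriat_term j x]%O x.

Lemma afriat_utility_le j x : afriat_utility x <= afriat_term j x.
Proof. by rewrite /afriat_utility; case: arg_minP => // i _; apply. Qed.

Lemma afriat_utility_incr : strictly_increasing afriat_utility.
Proof.
move=> x y _ x_le_y x_neq_y; rewrite [ltRHS]/afriat_utility.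
case: arg_minP => // j _ _; apply: le_lt_trans (afriat_utility_le j x) _.
by rewrite ltrD2l afriat_shift_lt // ltrD2r dotp_lt.
Qed.

Lemma afriat_term_ge i j : afriat_rank i <= afriat_term j (d i).
Proof.
have := afriat_rank_ge0 j; rewrite /afriat_term /afriat_shift.
case: sideP (@U_weak i j) (@U_strict i j) => [dot1 weak _|dot_gt1 _ _|dot_lt1 _ strict].
- by rewrite dot1 subrr ltxx addr0 => _; apply/afriat_rank_le/weak.
- by rewrite subr_gt0 dot_gt1; have := afriat_rank_le_card i; lra.
- rewrite subr_gt0 ltNge (ltW dot_lt1) /=.
  have := afriat_rank_lt (strict erefl); have := dotp_gt0 p_gt0 j (d_budget i).
  lra.
Qed.

Lemma afriat_term_budget i y : budget p i y -> afriat_term i y = afriat_rank i.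
Proof. by case=> _ dot1; rewrite /afriat_term /afriat_shift dot1 subrr ltxx addr0. Qed.

Lemma rationalizable_afriat : rationalizable p d.
Proof.
exists afriat_utility; split; first exact: afriat_utility_incr.
have utility_d i : afriat_utility (d i) = afriat_rank i.
  apply/eqP; rewrite eq_le; apply/andP; split.
    by rewrite -(afriat_term_budget (d_budget i)) afriat_utility_le.
  by rewrite /afriat_utility; case: arg_minP => // j _ _; apply: afriat_term_ge.
move=> i; split => // y y_budget; rewrite utility_d.
by rewrite -(afriat_term_budget y_budget) afriat_utility_le.
Qed.

End Afriat.

Section RevealedPreference.
Variables (R : realType) (G N : nat) (p : 'I_N.+1 -> 'I_G -> R).
Hypothesis p_gt0 : forall j g, 0 < p j g.

(* A choice strictly inside B_j, scaled up onto B_j, becomes componentwise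
   larger; so it is strictly worse than the choice d j. *)
Lemma rationalizable_revealed (d : 'I_N.+1 -> G.-tuple R) : rationalizable p d ->
  exists U : 'I_N.+1 -> R,
    (forall i j, side p j (d i) = None -> U i <= U j) /\
    (forall i j, side p j (d i) = Some false -> U i < U j).
Proof.
move=> [u [u_incr u_max]]; exists (u \o d); split => i j /=.
  by move=> on_j; apply: (u_max j).2; apply: side_budget on_j; case: (u_max i).1.
case: sideP => // below _; have d_budget := (u_max i).1; have [d_ge0 _] := d_budget.
have dot_gt0 := dotp_gt0 p_gt0 j d_budget.
pose t := (dotp p j (d i))^-1.
have t_ge1 : 1 <= t by rewrite invf_ge1 // ltW.
pose y := map_tuple ( *%R t) (d i).
have y_k k : tnth y k = t * tnth (d i) k by rewrite tnth_map.
have y_budget : budget p j y.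
  split=> [k|]; first by rewrite y_k mulr_ge0 ?(le_trans ler01 t_ge1) ?d_ge0.
  rewrite /dotp; under eq_bigr do rewrite y_k mulrCA.
  by rewrite -mulr_sumr mulVf // gt_eqF.
apply: lt_le_trans ((u_max j).2 y y_budget).
apply: u_incr => // [k|]; first by rewrite y_k ler_peMl ?d_ge0.
by apply: contraTneq below => ->; rewrite y_budget.2 ltxx.
Qed.

Lemma rationalizable_same_sides (d d' : 'I_N.+1 -> G.-tuple R) :
  rationalizable p d -> (forall i, budget p i (d' i)) ->
  (forall i j, side p j (d' i) = side p j (d i)) -> rationalizable p d'.
Proof.
move=> /rationalizable_revealed [U [U_weak U_strict]] d'_budget same_side.
apply: (rationalizable_afriat (U := U) p_gt0 d'_budget) => i j; rewrite same_side.
  exact: U_weak.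
exact: U_strict.
Qed.

End RevealedPreference.

Lemma measurable_preimageT d d' (T : measurableType d) (T' : measurableType d')
    (f : T -> T') (B : set T') :
  measurable_fun setT f -> measurable B -> measurable (f @^-1` B).
Proof. by move=> mf mB; rewrite -[_ @^-1` _]setTI; exact: mf. Qed.

Lemma negligible_big_setU d (T : ringOfSetsType d) (R : realFieldType)
    (mu : {content set T -> \bar R}) (I : Type) (r : seq I) (P : pred I)
    (F : I -> set T) :
  (forall i, P i -> mu.-negligible (F i)) ->
  mu.-negligible (\big[setU/set0]_(i <- r | P i) F i).
Proof.
by move=> negF; elim/big_ind: _ => //; [exact: negligible_set0 | exact: negligibleU].
Qed.

Lemma measure_setI_conull d (T : measurableType d) (R : realType)
    (mu : {measure set T -> \bar R}) (A B : set T) :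
  measurable A -> measurable B -> mu.-negligible (~` B) -> mu A = mu (A `&` B).
Proof.
move=> mA mB negB; rewrite (measureDI mu mA mB) (measure_negligible (A := A `\` B)).
- by rewrite add0e.
- exact: measurableD.
- by apply: negligibleS negB => x [].
Qed.

Section IntegralBounds.
Context d (T : measurableType d) (R : realType) (mu : {measure set T -> \bar R}).
Variables (A : set T) (f : T -> R).
Hypotheses (mA : measurable A) (mf : measurable_fun A f) (A_n0 : A !=set0).
Hypothesis f_ge0 : forall x, A x -> 0 <= f x.

Lemma inf_mul_le_integral :
  ((inf (f @` A))%:E * mu A <= \int[mu]_(x in A) (f x)%:E)%E.
Proof.
have lbA : has_lbound (f @` A) by exists 0 => _ [x Ax <-]; exact: f_ge0.
rewrite -integral_cst //; apply: ge0_le_integral => //.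
- move=> x _; rewrite lee_fin; apply: lb_le_inf; first exact: image_nonempty.
  by move=> _ [y Ay <-]; exact: f_ge0.
- exact/measurable_EFinP.
- by move=> x Ax; rewrite lee_fin; apply: ge_inf => //; exists x.
Qed.

Lemma integral_le_sup_mul : has_ubound (f @` A) ->
  (\int[mu]_(x in A) (f x)%:E <= (sup (f @` A))%:E * mu A)%E.
Proof.
move=> ubA; rewrite -integral_cst //; apply: ge0_le_integral => //.
- exact/measurable_EFinP.
- by move=> x Ax; rewrite lee_fin; apply: ub_le_sup => //; exists x.
Qed.

End IntegralBounds.

Section Patches.
Variables (R : realType) (G N : nat) (p : 'I_N -> 'I_G -> R).
Local Notation vec := (G.-tuple R).

Definition sidevec (y : vec) : signvec N := [ffun j => side p j y].

Definition sidevecs (d : N.-tuple vec) : choice_t N := [ffun j => sidevec (tnth d j)].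

Lemma patchset_sidevec y : nonnegv y -> patchset p (sidevec y) y.
Proof. by move=> y_ge0; split => // j; rewrite ffunE. Qed.

Lemma patchset_sidevecE s y : patchset p s y -> s = sidevec y.
Proof. by move=> [_ sides]; apply/ffunP => j; rewrite ffunE. Qed.

Lemma measurable_dotp j : measurable_fun setT (dotp p j).
Proof.
apply: measurable_sum => k; apply: measurable_funM.
  exact: measurable_cst.
exact: measurable_tnth.
Qed.

Lemma measurable_side j o : measurable [set y : vec | side p j y = o].
Proof.
have side_preimage o' (B : set R) : measurable B ->
    (forall y, side p j y = o' <-> B (dotp p j y)) -> measurable [set y | side p j y = o'].
  move=> mB sideB; rewrite (_ : [set y | _] = dotp p j @^-1` B).
    exact: measurable_preimageT (measurable_dotp j) mB.
  by apply/seteqP; split => y /sideB.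
case: o => [[]|].
- apply: (side_preimage _ `]1, +oo[%classic) => // y; rewrite /= in_itv /= andbT.
  by case: sideP => h; split => // ?; exfalso; lra.
- apply: (side_preimage _ `]-oo, 1[%classic) => // y; rewrite /= in_itv /=.
  by case: sideP => h; split => // ?; exfalso; lra.
- apply: (side_preimage _ [set 1]) => // y /=.
  by case: sideP => h; split => // ?; exfalso; lra.
Qed.

Lemma measurable_nonnegv : measurable [set y : vec | nonnegv y].
Proof.
rewrite (_ : [set y | _] = \bigcap_(k in [set: 'I_G])
    ((fun y : vec => tnth y k) @^-1` `[0, +oo[%classic)).
  apply: fin_bigcap_measurable => // k _.
  by apply: measurable_preimageT => //; exact: measurable_tnth.
apply/seteqP; split => y /= y_ge0 k.
  by move=> _; rewrite /= in_itv /= andbT.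
by have := y_ge0 k I; rewrite /= in_itv /= andbT.
Qed.

Lemma measurable_patchset s : measurable (patchset p s).
Proof.
rewrite (_ : patchset p s =
    [set y | nonnegv y] `&` \bigcap_(j in setT) [set y | side p j y = s j]).
  apply: measurableI; first exact: measurable_nonnegv.
  by apply: fin_bigcap_measurable => // j _; exact: measurable_side.
by apply/seteqP; split => y /= [y_ge0 sides]; split => // j; [move=> _|]; apply: sides.
Qed.

Lemma measurable_budget j : measurable (budget p j).
Proof.
rewrite (_ : budget p j = [set y | nonnegv y] `&` [set y | side p j y = None]).
  by apply: measurableI; [exact: measurable_nonnegv | exact: measurable_side].
apply/seteqP; split => y /=; last by case=> y_ge0; apply: side_budget.
by move=> y_budget; split; [case: y_budget | exact: budget_side].
Qed.

Lemma measurable_sidevecs (C : set (choice_t N)) : measurable (sidevecs @^-1` C).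
Proof.
rewrite (_ : sidevecs @^-1` C = \bigcup_(c in C) \bigcap_(j in setT) \bigcap_(j' in setT)
    ((fun d : N.-tuple vec => tnth d j) @^-1` [set y | side p j' y = c j j'])).
  apply: fin_bigcup_measurable => [|c _]; first exact: finite_finset.
  apply: fin_bigcap_measurable => // j _.
  apply: fin_bigcap_measurable => // j' _.
  by apply: measurable_preimageT; [exact: measurable_tnth | exact: measurable_side].
apply/seteqP; split => d /=.
  by move=> Cd; exists (sidevecs d) => // j _ j' _; rewrite /= !ffunE.
move=> [c Cc sides]; suff -> : sidevecs d = c by [].
by apply/ffunP => j; apply/ffunP => j'; rewrite !ffunE; exact: sides.
Qed.

Lemma retained_budget j s y : retained p j s -> patchset p s y -> budget p j y.
Proof. by move=> [s_j _ _] [y_ge0 sides]; apply: side_budget; rewrite // sides. Qed.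

Lemma retained_sidevec j y :
  budget p j y -> ~ multi_plane (sidevec y) -> retained p j (sidevec y).
Proof.
move=> y_budget single; have on_j : sidevec y j = None by rewrite ffunE budget_side.
split => //; last by exists y; apply: patchset_sidevec; case: y_budget.
move=> j' j'_neq; apply/eqP => on_j'; apply: single.
by exists j, j'; rewrite eq_sym.
Qed.

Definition retained_union (J : 'I_N) : set vec :=
  \big[setU/set0]_(s <- index_enum (signvec N) | `[< retained p J s >]) patchset p s.

Definition multi_plane_union : set vec :=
  \big[setU/set0]_(s <- index_enum (signvec N) | `[< multi_plane s >]) patchset p s.

Lemma measurable_retained_union J : measurable (retained_union J).
Proof. by apply: bigsetU_measurable => s _; exact: measurable_patchset. Qed.

Lemma measurable_multi_plane_union : measurable multi_plane_union.
Proof. by apply: bigsetU_measurable => s _; exact: measurable_patchset. Qed.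

Lemma multi_plane_union_sidevec y :
  nonnegv y -> multi_plane (sidevec y) -> multi_plane_union y.
Proof.
move=> y_ge0 ms; rewrite /multi_plane_union -bigcup_seq_cond; exists (sidevec y).
  by rewrite /= mem_index_enum asboolT.
exact: patchset_sidevec.
Qed.

Lemma budget_sub_patches J : budget p J `<=` retained_union J `|` multi_plane_union.
Proof.
move=> y y_budget; have [y_ge0 _] := y_budget.
have [ms|single] := pselect (multi_plane (sidevec y)).
  by right; exact: multi_plane_union_sidevec.
left; rewrite /retained_union -bigcup_seq_cond; exists (sidevec y).
  by rewrite /= mem_index_enum; apply/asboolP/retained_sidevec.
exact: patchset_sidevec.
Qed.

Lemma negligible_multi_plane_union (mu : {measure set vec -> \bar R}) :
  (forall s, multi_plane s -> mu (patchset p s) = 0%E) -> mu.-negligible multi_plane_union.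
Proof.
move=> multi_null; apply: negligible_big_setU => s /asboolP ms.
by exists (patchset p s); split => //; [exact: measurable_patchset | exact: multi_null].
Qed.

Lemma objective_regroup (rep : signvec N -> vec) J (F : signvec N -> R) nu :
  objective p rep J F nu = \sum_(s | `[< retained p J s >])
    F s * \sum_(c | `[< is_col p rep c >] && (c J == s)) nu c.
Proof.
rewrite /objective.
rewrite (partition_big (fun c : choice_t N => c J) (fun s => `[< retained p J s >])).
  apply: eq_bigr => s _; rewrite mulr_sumr; apply: eq_bigr => c /andP[_ /eqP ->] //.
by move=> c /asboolP [c_ret _]; apply/asboolP; exact: c_ret J.
Qed.

End Patches.

Section ColumnWeights.
Variables (R : realType) (G n : nat) (p : 'I_n.+1 -> 'I_G -> R).
Variable rep : signvec n.+1 -> G.-tuple R.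
Hypothesis p_gt0 : forall j g, 0 < p j g.
Hypothesis rep_patch : forall j s, retained p j s -> patchset p s (rep s).
Local Notation vec := (G.-tuple R).
Local Notation demand := (n.+1.-tuple vec).

Lemma is_col_sidevecs (d : demand) : rationalizable p (tnth d) ->
  (forall j, ~ multi_plane (sidevec p (tnth d j))) -> is_col p rep (sidevecs p d).
Proof.
move=> d_rat single.
have d_budget j := rationalizable_budget j d_rat.
have ret j : retained p j (sidevecs p d j) by rewrite ffunE; exact: retained_sidevec.
split; first exact: ret.
apply: (rationalizable_same_sides p_gt0 d_rat).
  by move=> j; apply: retained_budget (ret j) (rep_patch (ret j)).
by move=> i j; have [_ ->] := rep_patch (ret i); rewrite !ffunE.
Qed.

Variables (P : 'I_n.+1 -> probability vec R) (Q : probability demand R).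
Variable S : set demand.
Hypothesis Q_marginal : forall j (A : set vec), measurable A ->
  Q ((fun d : demand => tnth d j) @^-1` A) = P j A.
Hypothesis mS : measurable S.
Hypothesis S_rat : S `<=` [set d | rationalizable p (tnth d)].
Hypothesis QS : Q S = 1%E.
Hypothesis multi_null : forall j s, multi_plane s -> P j (patchset p s) = 0%E.

Definition regular_demand : set demand :=
  S `&` sidevecs p @^-1` [set c | forall j, ~ multi_plane (c j)].

Lemma measurable_regular_demand : measurable regular_demand.
Proof. by apply: measurableI => //; exact: measurable_sidevecs. Qed.

Lemma regular_demand_budget d j : regular_demand d -> budget p j (tnth d j).
Proof. by move=> [/S_rat /(rationalizable_budget j)]. Qed.

Lemma regular_demand_is_col d : regular_demand d -> is_col p rep (sidevecs p d).
Proof.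
move=> [Sd single]; apply: is_col_sidevecs; first exact: S_rat.
by move=> j; have := single j; rewrite ffunE.
Qed.

Lemma negligible_irregular_demand : Q.-negligible (~` regular_demand).
Proof.
have null_notS : Q.-negligible (~` S).
  exists (~` S); split => //; first exact: measurableC.
  by rewrite probability_setC // QS subee.
pose multi := \big[setU/set0]_(j <- index_enum 'I_n.+1)
  ((fun d : demand => tnth d j) @^-1` multi_plane_union p).
have null_multi : Q.-negligible multi.
  apply: negligible_big_setU => j _; have mU := measurable_multi_plane_union p.
  exists ((fun d : demand => tnth d j) @^-1` multi_plane_union p); split => //.
    by apply: measurable_preimageT => //; exact: measurable_tnth.
  apply: eq_trans (Q_marginal j mU) _.
  exact: measure_negligible mU (negligible_multi_plane_union (multi_null j)).
apply: negligibleS (negligibleU null_notS null_multi) => d irregular.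
have [Sd|] := pselect (S d); [right | by left].
have [j ms] : exists j, multi_plane (sidevec p (tnth d j)).
  apply: contrapT => single; apply: irregular; split => // j; rewrite ffunE => ms.
  by apply: single; exists j.
rewrite /multi -bigcup_seq; exists j; first exact: mem_index_enum.
by apply: multi_plane_union_sidevec ms; case: (rationalizable_budget j (S_rat Sd)).
Qed.

Definition column_weight (c : choice_t n.+1) : R :=
  fine (Q (regular_demand `&` sidevecs p @^-1` [set c])).

Lemma column_weight_ge0 c : 0 <= column_weight c.
Proof. exact/fine_ge0/measure_ge0. Qed.

Lemma column_weight_marginal j s : retained p j s ->
  \sum_(c | `[< is_col p rep c >] && (c j == s)) column_weight c = vrep p P j s.
Proof.
move=> ret_s; have mpatch := measurable_patchset p s.
have mcell c : measurable (regular_demand `&` sidevecs p @^-1` [set c]).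
  exact: measurableI measurable_regular_demand (measurable_sidevecs _ _).
apply: EFin_inj; rewrite -sumEFin.
under eq_bigr do rewrite fineK ?fin_num_measure //.
rewrite bigfs ?index_enum_uniq //; last by move=> c _; rewrite mem_index_enum.
rewrite -measure_fin_bigcup //; last by move=> c c' _ _ [d [[_ <-] [_ <-]]].
rewrite /vrep fineK ?fin_num_measure // -Q_marginal //.
rewrite (measure_setI_conull _ measurable_regular_demand negligible_irregular_demand);
  last by apply: measurable_preimageT => //; exact: measurable_tnth.
congr (Q _); apply/seteqP; split => d.
- move=> [c /= /andP[_ /eqP <-] [reg_d /= <-]]; split => //.
  by rewrite ffunE; apply: patchset_sidevec; case: (regular_demand_budget j reg_d).
- move=> [d_j reg_d]; exists (sidevecs p d) => //; apply/andP; split.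
    exact/asboolP/regular_demand_is_col.
  by rewrite ffunE -(patchset_sidevecE d_j).
Qed.

Lemma column_weight_feasible J : feasible p rep (vrep p P) J column_weight.
Proof.
by split=> [c _|j s _ ret_s]; [exact: column_weight_ge0 | exact: column_weight_marginal].
Qed.

Lemma objective_column_weight J (F : signvec n.+1 -> R) :
  objective p rep J F column_weight =
  \sum_(s | `[< retained p J s >]) F s * vrep p P J s.
Proof.
rewrite objective_regroup; apply: eq_bigr => s /asboolP ret_s.
by rewrite column_weight_marginal.
Qed.

End ColumnWeights.

Section ExpectedDemand.
Variables (R : realType) (G N : nat) (p : 'I_N -> 'I_G -> R).
Hypothesis p_gt0 : forall j g, 0 < p j g.
Variables (mu : probability (G.-tuple R) R) (J : 'I_N) (k : 'I_G).
Hypothesis mu_budget : mu (budget p J) = 1%E.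
Hypothesis multi_null : forall s, multi_plane s -> mu (patchset p s) = 0%E.

Let measurable_coord (A : set (G.-tuple R)) :
  measurable_fun A (fun y : G.-tuple R => tnth y k).
Proof. by apply: measurable_funTS; exact: measurable_tnth. Qed.

Lemma retained_union_conull : mu (~` retained_union p J) = 0%E.
Proof.
have mU := measurable_retained_union p J; apply/negligibleP; first exact: measurableC.
have null_notB : mu.-negligible (~` budget p J).
  exists (~` budget p J); split => //; first by apply: measurableC; exact: measurable_budget.
  by rewrite probability_setC ?mu_budget ?subee //; exact: measurable_budget.
apply: negligibleS (negligibleU null_notB (negligible_multi_plane_union multi_null)).
move=> y notU; have [y_budget|] := pselect (budget p J y); [right | by left].
by case: (budget_sub_patches y_budget).
Qed.

Lemma integral_coord_patches :
  (\int[mu]_y (tnth y k)%:E =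
   \sum_(s | `[< retained p J s >]) \int[mu]_(y in patchset p s) (tnth y k)%:E)%E.
Proof.
have mU := measurable_retained_union p J.
have m_coord A : measurable_fun A (fun y : G.-tuple R => (tnth y k)%:E).
  by apply/measurable_EFinP; exact: measurable_coord.
rewrite -(setUv (retained_union p J)) integral_setU //; first last.
- by rewrite /disj_set setICr.
- exact: measurableC.
rewrite (null_set_integral _ _ retained_union_conull) ?adde0 //; last exact: measurableC.
rewrite /retained_union -big_filter ge0_integral_bigsetU //.
- by rewrite big_filter.
- exact: measurable_patchset.
- exact/filter_uniq/index_enum_uniq.
- by move=> s s' _ _ [y [ys ys']]; rewrite (patchset_sidevecE ys) (patchset_sidevecE ys').
- by move=> y; rewrite big_filter -bigcup_seq_cond => -[s _ [y_ge0 _]]; rewrite lee_fin.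
Qed.

Lemma expected_demand_bounds :
  ((\sum_(s | `[< retained p J s >]) dlow p k s * fine (mu (patchset p s)))%:E
     <= \int[mu]_y (tnth y k)%:E)%E /\
  (\int[mu]_y (tnth y k)%:E
     <= (\sum_(s | `[< retained p J s >]) dupp p k s * fine (mu (patchset p s)))%:E)%E.
Proof.
have patch_fact s : retained p J s -> [/\ measurable (patchset p s),
    patchset p s !=set0, mu (patchset p s) \is a fin_num &
    forall y, patchset p s y -> 0 <= tnth y k].
  move=> [_ _ s_n0]; have mpatch := measurable_patchset p s.
  by split => // [|y [y_ge0 _]]; [exact: fin_num_measure | exact: y_ge0].
rewrite integral_coord_patches -!sumEFin; split; apply: lee_sum => s /asboolP ret_s.
  have [mpatch s_n0 fin_s coord_ge0] := patch_fact s ret_s.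
  by rewrite EFinM fineK //; exact: inf_mul_le_integral.
have [mpatch s_n0 fin_s coord_ge0] := patch_fact s ret_s.
rewrite EFinM fineK //; apply: integral_le_sup_mul => //.
by exists (p J k)^-1 => _ [y y_patch <-]; exact/budget_coord_le/(retained_budget ret_s).
Qed.

End ExpectedDemand.

Unset Implicit Arguments.

Theorem corollary2 (R : realType) (G n : nat) (p : 'I_n.+1 -> 'I_G -> R)
    (rep : signvec n.+1 -> G.-tuple R)
    (P : 'I_n.+1 -> probability (G.-tuple R) R) (k : 'I_G) :
  (forall j g, 0 < p j g) ->
  (forall j s, retained p j s -> patchset p s (rep s)) ->
  stoch_demand p P ->
  stoch_rationalizable p P ->
  (forall j s, multi_plane s -> P j (patchset p s) = 0%E) ->
  (delta_low p rep (vrep p P) ord_max k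
     <= \int[P ord_max]_y (tnth y k)%:E)%E /\
  (\int[P ord_max]_y (tnth y k)%:E
     <= delta_upp p rep (vrep p P) ord_max k)%E.
Proof.
move=> p_gt0 rep_patch P_budget [Q [Q_marginal [S [mS S_rat QS]]]] multi_null.
pose nu := column_weight p Q S.
have nu_feasible : feasible p rep (vrep p P) ord_max nu.
  exact: column_weight_feasible.
have nu_objective F : objective p rep ord_max F nu =
    \sum_(s | `[< retained p ord_max s >]) F s * vrep p P ord_max s.
  exact: objective_column_weight.
have [low upp] := expected_demand_bounds p_gt0 k (P_budget ord_max) (multi_null ord_max).
split.
- apply: le_trans low; rewrite -nu_objective.
  by apply: ereal_inf_lbound; exists nu.
- apply: le_trans upp _; rewrite -nu_objective.
  by apply: ereal_sup_ubound; exists nu.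
Qed.
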